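(* Let $B=(B,+,0)$ be a unitary magma, let $(X,\varphi)$ and $(X',\varphi')$ be $B$-actions, and let $f\colon X\to X'$ be a morphism of unitary magmas (with respect to the structures $x+x'=\varphi(x,0,x',0)$ on $X$ and $y+y'=\varphi'(y,0,y',0)$ on $X'$). If $f$ is an isomorphism and a $B$-morphism, then there exists a unique isomorphism of unitary magmas $g\colon X\rtimes_\varphi B\to X'\rtimes_{\varphi'}B$ such that $\pi_{X'}g=f\pi_X$, $g(x,0)=(f(x),0)$ for all $x\in X$, and $g(0,b)=(0,b)$ for all $b\in B$, where $\pi_X,\pi_{X'}$ denote the first-coordinate projections.
   Context: A unitary magma is a set with a binary operation $+$ and an element $0$ with $b+0=b=0+b$ for all $b$; morphisms preserve $+$ and $0$. A $B$-action is a pair $(X,\varphi)$ with $X$ a set and $\varphi\colon X\times B\times X\times B\to X$ a map such that: (1) there is an element $0\in X$ with $\varphi(x,0,0,0)=x=\varphi(0,0,x,0)$ for all $x\in X$; (2) $\varphi(x,b,0,0)=\varphi(x,0,0,b)=\varphi(0,0,x,b)$ for all $x\in X,b\in B$; (3) $\varphi(0,b,0,b')=0$ for all $b,b'\in B$; (4) writing $\varphi_{00}(x,b)=\varphi(x,0,0,b)$, for all $x,x'\in X$, $b,b'\in B$: $\varphi(x,b,x',b')=\varphi_{00}\big(\varphi(\varphi_{00}(x,b),b,\varphi_{00}(x',b'),b'),\,b+b'\big)$. The semidirect product $X\rtimes_\varphi B$ is the set $\{(x,b)\in X\times B\mid\varphi(x,0,0,b)=x\}$ with operation $(x,b)+(x',b')=(\varphi(x,b,x',b'),b+b')$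 and neutral element $(0,0)$. A $B$-morphism from $(X,\varphi)$ to $(X',\varphi')$ is a map $f\colon X\to X'$ with $f(0)=0$ and $\varphi'(f(x),b,f(x'),b')=f(\varphi(x,b,x',b'))$ for all $x,x'\in X$, $b,b'\in B$. *)

From Stdlib Require Import ssreflect ssrfun.

Set Implicit Arguments.

Definition unitary_magma (M : Type) (add : M -> M -> M) (z : M) : Prop :=
  forall b, add b z = b /\ add z b = b.

Definition umagma_morph (M N : Type) (addM : M -> M -> M) (zM : M)
  (addN : N -> N -> N) (zN : N) (h : M -> N) : Prop :=
  h zM = zN /\ forall a b, h (addM a b) = addN (h a) (h b).

Definition umagma_iso (M N : Type) (addM : M -> M -> M) (zM : M)
  (addN : N -> N -> N) (zN : N) (h : M -> N) : Prop :=
  umagma_morph addM zM addN zN h /\ bijective h.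

Definition is_action (B X : Type) (addB : B -> B -> B) (zB : B) (zX : X)
  (phi : X -> B -> X -> B -> X) : Prop :=
  (forall x, phi x zB zX zB = x /\ phi zX zB x zB = x) /\
  (forall x b, phi x b zX zB = phi x zB zX b /\ phi x zB zX b = phi zX zB x b) /\
  (forall b b', phi zX b zX b' = zX) /\
  (forall x x' b b',
      phi x b x' b' =
      phi (phi (phi x zB zX b) b (phi x' zB zX b') b') zB zX (addB b b')).

Definition act_add (B X : Type) (zB : B) (phi : X -> B -> X -> B -> X)
  (x x' : X) : X := phi x zB x' zB.

Definition B_morph (B X X' : Type) (zX : X) (zX' : X')
  (phi : X -> B -> X -> B -> X) (phi' : X' -> B -> X' -> B -> X')
  (f : X -> X') : Prop :=
  f zX = zX' /\ forall x b x' b', phi' (f x) b (f x') b' = f (phi x b x' b').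

Definition sd_mem (B X : Type) (zB : B) (zX : X)
  (phi : X -> B -> X -> B -> X) (p : X * B) : Prop :=
  phi p.1 zB zX p.2 = p.1.

Definition SD (B X : Type) (zB : B) (zX : X) (phi : X -> B -> X -> B -> X) :=
  {p : X * B | sd_mem zB zX phi p}.

Definition sd_add_raw (B X : Type) (addB : B -> B -> B)
  (phi : X -> B -> X -> B -> X) (p q : X * B) : X * B :=
  (phi p.1 p.2 q.1 q.2, addB p.2 q.2).

Lemma sd_add_mem (B X : Type) (addB : B -> B -> B) (zB : B) (zX : X)
  (phi : X -> B -> X -> B -> X) (HB : unitary_magma addB zB)
  (H : is_action addB zB zX phi) (p q : X * B) :
  sd_mem zB zX phi (sd_add_raw addB phi p q).
Proof.
case: H => [H1 [H2 [H3 H4]]].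
have idem : forall y b, phi (phi y zB zX b) zB zX b = phi y zB zX b.
  move=> y b.
  have := H4 y zX zB b.
  rewrite (proj1 (H1 y)).
  have -> : phi zX zB zX b = zX by apply: H3.
  by rewrite (proj2 (HB b)) => <-.
rewrite /sd_mem /sd_add_raw /=.
set w := phi p.1 p.2 q.1 q.2.
have Hw : w = phi (phi (phi p.1 zB zX p.2) p.2 (phi q.1 zB zX q.2) q.2) zB zX (addB p.2 q.2) by apply: H4.
by rewrite Hw idem.
Qed.

Definition sd_add (B X : Type) (addB : B -> B -> B) (zB : B) (zX : X)
  (phi : X -> B -> X -> B -> X) (HB : unitary_magma addB zB)
  (H : is_action addB zB zX phi)
  (p q : SD zB zX phi) : SD zB zX phi :=
  exist _ (sd_add_raw addB phi (proj1_sig p) (proj1_sig q))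
        (sd_add_mem HB H (proj1_sig p) (proj1_sig q)).

Lemma sd_zero_mem (B X : Type) (addB : B -> B -> B) (zB : B) (zX : X)
  (phi : X -> B -> X -> B -> X) (H : is_action addB zB zX phi) :
  sd_mem zB zX phi (zX, zB).
Proof. by case: H => [H1 _]; rewrite /sd_mem /=; apply: (proj1 (H1 zX)). Qed.

Definition sd_zero (B X : Type) (addB : B -> B -> B) (zB : B) (zX : X)
  (phi : X -> B -> X -> B -> X) (H : is_action addB zB zX phi) : SD zB zX phi :=
  exist _ (zX, zB) (sd_zero_mem H).

(* A B-morphism f preserves membership in the semidirect product, so
   (x, b) |-> (f x, b) maps X ⋊ B to X' ⋊ B; it is additive because f
   commutes with the actions, and bijective with the lift of f^-1 as
   inverse.  Uniqueness: every (x, b) in X ⋊ B is the sum (x, 0) + (0, b),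
   so an additive g is determined by its values on these two kinds of
   elements. *)

From Stdlib Require Import ssreflect ssrfun.
From Stdlib Require Import FunctionalExtensionality ProofIrrelevance.

Lemma val_sig_inj {A : Type} {P : A -> Prop} : injective (@proj1_sig A P).
Proof. exact: eq_sig_hprop (fun _ => proof_irrelevance _). Qed.

Lemma B_morph_inv {B X X' : Type} {zX : X} {zX' : X'}
    {phi : X -> B -> X -> B -> X} {phi' : X' -> B -> X' -> B -> X'}
    {f : X -> X'} {g : X' -> X} :
  B_morph zX zX' phi phi' f -> cancel f g -> cancel g f ->
  B_morph zX' zX phi' phi g.
Proof.
move=> [f0 fphi] fK gK; split; first by rewrite -f0 fK.
by move=> y b y' b'; apply: (can_inj fK); rewrite -fphi !gK.
Qed.

Section Lift.

Variables (B X X' : Type) (zB : B) (zX : X) (zX' : X').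
Variables (phi : X -> B -> X -> B -> X) (phi' : X' -> B -> X' -> B -> X').

Lemma sd_mem_map {f : X -> X'} {p : X * B} :
  B_morph zX zX' phi phi' f -> sd_mem zB zX phi p ->
  sd_mem zB zX' phi' (f p.1, p.2).
Proof. by case: p => [x b] [f0 fphi] /= hp; rewrite /sd_mem -f0 fphi hp. Qed.

Definition sd_map {f : X -> X'} (Hf : B_morph zX zX' phi phi' f)
    (p : SD zB zX phi) : SD zB zX' phi' :=
  exist _ (f (proj1_sig p).1, (proj1_sig p).2) (sd_mem_map Hf (proj2_sig p)).

End Lift.

Arguments sd_map {B X X' zB zX zX' phi phi' f}.

Lemma sd_map_cancel {B X X' : Type} {zB : B} {zX : X} {zX' : X'}
    {phi : X -> B -> X -> B -> X} {phi' : X' -> B -> X' -> B -> X'}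
    {f : X -> X'} {g : X' -> X}
    (Hf : B_morph zX zX' phi phi' f) (Hg : B_morph zX' zX phi' phi g) :
  cancel f g -> cancel (sd_map (zB := zB) Hf) (sd_map Hg).
Proof. by move=> fK [[x b] hp]; apply: val_sig_inj; rewrite /= fK. Qed.

Section Semidirect.

Variables (B : Type) (addB : B -> B -> B) (zB : B).
Hypothesis HB : unitary_magma addB zB.

Section Decomposition.

Context {X : Type} {zX : X} {phi : X -> B -> X -> B -> X}.
Hypothesis Hphi : is_action addB zB zX phi.

Lemma sd_mem_left (x : X) : sd_mem zB zX phi (x, zB).
Proof. by case: Hphi => [H1 _]; case: (H1 x). Qed.

Lemma sd_mem_right (b : B) : sd_mem zB zX phi (zX, b).
Proof. by case: Hphi => [_ [_ [H3 _]]]; apply: H3. Qed.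

Lemma sd_decomp (p : SD zB zX phi) :
  p = sd_add HB Hphi (exist _ (_, zB) (sd_mem_left (proj1_sig p).1))
                     (exist _ (zX, _) (sd_mem_right (proj1_sig p).2)).
Proof.
case: p => [[x b] hp]; apply: val_sig_inj => /=.
by rewrite /sd_add_raw /= hp; case: (HB b) => _ ->.
Qed.

End Decomposition.

Variables (X X' : Type) (zX : X) (zX' : X').
Variables (phi : X -> B -> X -> B -> X) (phi' : X' -> B -> X' -> B -> X').
Hypotheses (Hphi : is_action addB zB zX phi) (Hphi' : is_action addB zB zX' phi').

Lemma sd_map_morph {f : X -> X'} (Hf : B_morph zX zX' phi phi' f) :
  umagma_morph (sd_add HB Hphi) (sd_zero Hphi)
               (sd_add HB Hphi') (sd_zero Hphi') (sd_map Hf).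
Proof.
case: (Hf) => [f0 fphi]; split; first by apply: val_sig_inj; rewrite /= f0.
by move=> p q; apply: val_sig_inj; rewrite /= /sd_add_raw /= fphi.
Qed.

Lemma sd_map_iso {f : X -> X'} (Hf : B_morph zX zX' phi phi' f) :
  bijective f ->
  umagma_iso (sd_add HB Hphi) (sd_zero Hphi)
             (sd_add HB Hphi') (sd_zero Hphi') (sd_map Hf).
Proof.
case=> g fK gK; split; first exact: sd_map_morph.
have Hg := B_morph_inv Hf fK gK.
by exists (sd_map Hg); apply: sd_map_cancel.
Qed.

Lemma sd_morph_unique {f : X -> X'} (Hf : B_morph zX zX' phi phi' f)
    (g : SD zB zX phi -> SD zB zX' phi') :
  (forall a b, g (sd_add HB Hphi a b) = sd_add HB Hphi' (g a) (g b)) ->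
  (forall x (hx : sd_mem zB zX phi (x, zB)),
      proj1_sig (g (exist _ (x, zB) hx)) = (f x, zB)) ->
  (forall b (hb : sd_mem zB zX phi (zX, b)),
      proj1_sig (g (exist _ (zX, b) hb)) = (zX', b)) ->
  sd_map Hf = g.
Proof.
move=> gadd gleft gright; apply: functional_extensionality => p.
rewrite (sd_decomp Hphi p) gadd; apply: val_sig_inj.
rewrite /= gleft gright /sd_add_raw /=; case: (HB (proj1_sig p).2) => _ ->.
by case: (Hf) => [f0 fphi]; rewrite -f0 fphi.
Qed.

End Semidirect.

Theorem proposition4p3
  (B : Type) (addB : B -> B -> B) (zB : B) (HB : unitary_magma addB zB)
  (X : Type) (zX : X) (phi : X -> B -> X -> B -> X)
  (Hphi : is_action addB zB zX phi)
  (X' : Type) (zX' : X') (phi' : X' -> B -> X' -> B -> X')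
  (Hphi' : is_action addB zB zX' phi')
  (f : X -> X')
  (Hf_morph : umagma_morph (act_add zB phi) zX (act_add zB phi') zX' f)
  (Hf_iso : umagma_iso (act_add zB phi) zX (act_add zB phi') zX' f)
  (Hf_B : B_morph zX zX' phi phi' f) :
  exists! g : SD zB zX phi -> SD zB zX' phi',
    umagma_iso (sd_add HB Hphi) (sd_zero Hphi) (sd_add HB Hphi') (sd_zero Hphi') g /\
    (forall p, (proj1_sig (g p)).1 = f (proj1_sig p).1) /\
    (forall x (hx : sd_mem zB zX phi (x, zB)),
        proj1_sig (g (exist _ (x, zB) hx)) = (f x, zB)) /\
    (forall b (hb : sd_mem zB zX phi (zX, b)),
        proj1_sig (g (exist _ (zX, b) hb)) = (zX', b)).
Proof.
(* [Hf_morph] is not needed: it is the case b = b' = 0 of [Hf_B]. *)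
exists (sd_map Hf_B); split.
- split; first exact: sd_map_iso (proj2 Hf_iso).
  split; first by [].
  by split=> [//|b hb]; rewrite /= (proj1 Hf_B).
- move=> g [[[_ gadd] _] [_ [gleft gright]]].
  exact: sd_morph_unique gadd gleft gright.
Qed.
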